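(* Let $X$ be a topological space, $(Z,d)$ a bounded metric space, and $F:X\to 2^Z$ a lower quasicontinuous set-valued mapping. Then $$A=\{x\in X:\ \forall\varepsilon>0\ \exists U\in\mathcal V_X(x),\ \mathrm{diam}(F(U))\le 2\,\mathrm{diam}(F(x))+\varepsilon\}$$ is a residual subset of $X$.
   Context: $2^Z$ is the set of nonempty subsets of $Z$; $\mathcal V_X(x)$ is the set of neighborhoods of $x$ in $X$; $F(U)=\bigcup_{x\in U}F(x)$; $\mathrm{diam}(W)=\sup\{d(u,v):u,v\in W\}$. $F$ is lower quasicontinuous if for each $x_0\in X$, each neighborhood $U$ of $x_0$ and each open $W\subset Z$ with $F(x_0)\cap W\neq\emptyset$, there is an open $O$ with $\emptyset\ne O\subset U$ and $F(x)\cap W\ne\emptyset$ for all $x\in O$. Residual means containing a countable intersection of dense open sets. *)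

From Stdlib Require Import Reals Classical ClassicalEpsilon.
Open Scope R_scope.

Record topology (X : Type) : Type := Topology {
  is_open : (X -> Prop) -> Prop;
  open_full : is_open (fun _ => True);
  open_inter : forall A B, is_open A -> is_open B -> is_open (fun x => A x /\ B x);
  open_union : forall (I : Type) (A : I -> X -> Prop),
      (forall i, is_open (A i)) -> is_open (fun x => exists i, A i x)
}.
Arguments is_open {X} t _.

Definition nbhd {X : Type} (T : topology X) (x : X) (U : X -> Prop) : Prop :=
  exists O, is_open T O /\ O x /\ (forall y, O y -> U y).

Definition dense {X : Type} (T : topology X) (G : X -> Prop) : Prop :=
  forall O, is_open T O -> (exists y, O y) -> exists y, O y /\ G y.

Definition residual {X : Type} (T : topology X) (A : X -> Prop) : Prop :=
  exists G : nat -> X -> Prop,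
    (forall n, is_open T (G n)) /\ (forall n, dense T (G n)) /\
    (forall x, (forall n, G n x) -> A x).

Definition is_metric {Z : Type} (d : Z -> Z -> R) : Prop :=
  (forall u v, 0 <= d u v) /\
  (forall u v, d u v = 0 <-> u = v) /\
  (forall u v, d u v = d v u) /\
  (forall u v w, d u w <= d u v + d v w).

Definition bounded_metric {Z : Type} (d : Z -> Z -> R) : Prop :=
  exists M, forall u v, d u v <= M.

Definition metric_open {Z : Type} (d : Z -> Z -> R) (W : Z -> Prop) : Prop :=
  forall z, W z -> exists r, 0 < r /\ forall w, d z w < r -> W w.

(* diam W = sup { d u v : u, v in W } (chosen via classical choice; for
   nonempty W in a bounded metric space this supremum exists). *)
Definition dist_set {Z : Type} (d : Z -> Z -> R) (W : Z -> Prop) : R -> Prop :=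
  fun r => exists u v, W u /\ W v /\ r = d u v.

Definition diam {Z : Type} (d : Z -> Z -> R) (W : Z -> Prop) : R :=
  epsilon (inhabits 0) (fun D => is_lub (dist_set d W) D).

Definition img {X Z : Type} (F : X -> Z -> Prop) (U : X -> Prop) : Z -> Prop :=
  fun z => exists x, U x /\ F x z.

Definition lower_quasicontinuous {X Z : Type} (T : topology X)
    (d : Z -> Z -> R) (F : X -> Z -> Prop) : Prop :=
  forall x0 U, nbhd T x0 U ->
  forall W, metric_open d W -> (exists z, F x0 z /\ W z) ->
  exists O, is_open T O /\ (exists y, O y) /\ (forall y, O y -> U y) /\
    (forall x, O x -> exists z, F x z /\ W z).

From Stdlib Require Import Reals Lra Lia Classical ClassicalEpsilon.
Open Scope R_scope.

(* Fix eps > 0 and a nonempty open V.  Pick z0 in F(y0), y0 in V; lower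
   quasicontinuity gives a nonempty open O1 in V on which every F(x) meets
   the ball B(z0, eps/6).  Let R be the radius of F(O1) around z0 and u1 in
   F(O1) a point with d(z0, u1) > R - eps/6; once more we get a nonempty open
   O2 in O1 on which every F(x) meets B(u1, eps/6).  Then F(O2) lies within R
   of z0, so diam F(O2) <= 2R, while each F(x), x in O2, has points near z0
   and near u1, so diam F(x) > R - eps/2.  Hence the interior of the set of
   points satisfying the defining inequality of A for eps is dense, and A is
   the intersection of these interiors over eps = 1/(n+1). *)

Lemma is_lub_approx (E : R -> Prop) (m eps : R) :
  is_lub E m -> 0 < eps -> exists r, E r /\ m - eps < r.
Proof.
  intros [_ least] Heps.
  apply NNPP; intro none.
  assert (m <= m - eps); [|lra].
  apply least; intros r Er.
  apply Rnot_lt_le; intro lt; apply none; exists r; auto.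
Qed.

Section Diameter.

Variables (Z : Type) (d : Z -> Z -> R).
Hypothesis Hd : is_metric d.
Hypothesis Hb : bounded_metric d.

Lemma diam_is_lub (W : Z -> Prop) :
  (exists u, W u) -> is_lub (dist_set d W) (diam d W).
Proof.
  intros [u Wu]. destruct Hb as [M HM].
  unfold diam. apply epsilon_spec.
  apply upper_bound_thm.
  - exists M. intros r [a [b [_ [_ ->]]]]. apply HM.
  - exists (d u u), u, u. auto.
Qed.

Lemma dist_le_diam (W : Z -> Prop) (u v : Z) : W u -> W v -> d u v <= diam d W.
Proof.
  intros Wu Wv. apply (diam_is_lub W (ex_intro _ u Wu)). exists u, v. auto.
Qed.

Lemma diam_le (W : Z -> Prop) (r : R) :
  (exists u, W u) -> (forall u v, W u -> W v -> d u v <= r) -> diam d W <= r.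
Proof.
  intros Wne Hr. apply (diam_is_lub W Wne).
  intros s [u [v [Wu [Wv ->]]]]. auto.
Qed.

Lemma exists_radius (z : Z) (W : Z -> Prop) (eps : R) :
  (exists u, W u) -> 0 < eps ->
  exists rad u1, (forall u, W u -> d z u <= rad) /\ W u1 /\ rad - eps < d z u1.
Proof.
  intros [u Wu] Heps. destruct Hb as [M HM].
  destruct (upper_bound_thm (fun r => exists u, W u /\ r = d z u)) as [rad Hrad].
  - exists M. intros r [v [_ ->]]. apply HM.
  - exists (d z u), u. auto.
  - destruct (is_lub_approx _ rad eps Hrad Heps) as [r [[u1 [Wu1 ->]] far]].
    exists rad, u1. split; [|auto].
    intros v Wv. apply Hrad. exists v. auto.
Qed.

Lemma diam_le_twice_radius (z : Z) (W : Z -> Prop) (rad : R) :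
  (exists u, W u) -> (forall u, W u -> d z u <= rad) -> diam d W <= 2 * rad.
Proof.
  destruct Hd as [_ [_ [sym tri]]].
  intros Wne Hrad. apply diam_le; [exact Wne|].
  intros u v Wu Wv.
  pose proof (tri u z v). rewrite (sym u z) in *.
  pose proof (Hrad u Wu). pose proof (Hrad v Wv). lra.
Qed.

Lemma ball_open (z : Z) (r : R) : metric_open d (fun w => d z w < r).
Proof.
  destruct Hd as [_ [_ [_ tri]]].
  intros w Hw. exists (r - d z w). split; [lra|].
  intros w' Hw'. pose proof (tri z w w'). lra.
Qed.

Lemma ball_center (z : Z) (r : R) : 0 < r -> d z z < r.
Proof.
  destruct Hd as [_ [self _]].
  intros Hr. replace (d z z) with 0; [exact Hr|].
  symmetry. apply self. reflexivity.
Qed.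

End Diameter.

Section Interior.

Variables (X : Type) (T : topology X).

Definition interior (A : X -> Prop) : X -> Prop :=
  fun x => exists O : {O : X -> Prop | is_open T O /\ forall y, O y -> A y},
    proj1_sig O x.

Lemma interior_open (A : X -> Prop) : is_open T (interior A).
Proof.
  apply (open_union X T _ (fun O => proj1_sig O)).
  intros O. apply (proj2_sig O).
Qed.

Lemma interior_sub (A : X -> Prop) (x : X) : interior A x -> A x.
Proof.
  intros [O Ox]. apply (proj2_sig O). exact Ox.
Qed.

Lemma dense_interior (A : X -> Prop) :
  (forall V, is_open T V -> (exists y, V y) ->
     exists O, is_open T O /\ (exists y, O y) /\ (forall y, O y -> V y) /\
       (forall y, O y -> A y)) ->
  dense T (interior A).
Proof.
  intros inner V HV Vne.
  destruct (inner V HV Vne) as [O [HO [[y Oy] [OV OA]]]].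
  exists y. split; [auto|].
  exists (exist _ O (conj HO OA)). exact Oy.
Qed.

Lemma residual_of_dense_interiors (A : nat -> X -> Prop) (B : X -> Prop) :
  (forall n, dense T (interior (A n))) ->
  (forall x, (forall n, A n x) -> B x) ->
  residual T B.
Proof.
  intros Hdense HB. exists (fun n => interior (A n)). split; [|split].
  - intro n. apply interior_open.
  - exact Hdense.
  - intros x Hx. apply HB. intro n. apply interior_sub, Hx.
Qed.

End Interior.

Lemma exists_inv_succ_lt (eps : R) : 0 < eps -> exists n : nat, / INR (S n) < eps.
Proof.
  intros Heps. destruct (archimed_cor1 eps Heps) as [[|n] [Hn Hpos]].
  - inversion Hpos.
  - exists n. exact Hn.
Qed.

Section LowerQuasicontinuous.

Variables (X Z : Type) (T : topology X) (d : Z -> Z -> R).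
Hypothesis Hd : is_metric d.
Hypothesis Hb : bounded_metric d.
Variable F : X -> Z -> Prop.
Hypothesis HF : forall x, exists z, F x z.
Hypothesis Hlq : lower_quasicontinuous T d F.

Lemma img_nonempty (O : X -> Prop) : (exists y, O y) -> exists z, img F O z.
Proof.
  intros [y Oy]. destruct (HF y) as [z Fz]. exists z, y. auto.
Qed.

Lemma lqc_ball (V : X -> Prop) (y : X) (z : Z) (r : R) :
  is_open T V -> V y -> F y z -> 0 < r ->
  exists O, is_open T O /\ (exists x, O x) /\ (forall x, O x -> V x) /\
    (forall x, O x -> exists w, F x w /\ d z w < r).
Proof.
  intros HV Vy Fz Hr.
  apply (Hlq y V).
  - exists V. auto.
  - apply ball_open, Hd.
  - exists z. split; [exact Fz|]. apply ball_center; assumption.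
Qed.

Lemma lqc_diam_control (eps : R) (V : X -> Prop) :
  0 < eps -> is_open T V -> (exists y, V y) ->
  exists O, is_open T O /\ (exists y, O y) /\ (forall y, O y -> V y) /\
    (forall x, O x -> diam d (img F O) <= 2 * diam d (F x) + eps).
Proof.
  intros Heps HV [y0 Vy0].
  pose proof Hd as [_ [_ [sym tri]]].
  set (r := eps / 6). assert (Hr : 0 < r) by (unfold r; lra).
  destruct (HF y0) as [z0 Fz0].
  destruct (lqc_ball V y0 z0 r HV Vy0 Fz0 Hr)
    as [O1 [HO1 [O1ne [O1V near_z0]]]].
  destruct (exists_radius Z d Hb z0 (img F O1) r (img_nonempty O1 O1ne) Hr)
    as [rad [u1 [radius [[x1 [O1x1 Fu1]] far_u1]]]].
  destruct (lqc_ball O1 x1 u1 r HO1 O1x1 Fu1 Hr)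
    as [O2 [HO2 [O2ne [O2O1 near_u1]]]].
  exists O2. split; [exact HO2|]. split; [exact O2ne|].
  split; [intros y O2y; apply O1V, O2O1, O2y|].
  intros x O2x.
  assert (diam_img : diam d (img F O2) <= 2 * rad).
  { apply (diam_le_twice_radius Z d Hd Hb z0); [apply img_nonempty, O2ne|].
    intros u [y [O2y Fu]]. apply radius. exists y. auto. }
  destruct (near_z0 x (O2O1 x O2x)) as [w1 [Fw1 dw1]].
  destruct (near_u1 x O2x) as [w2 [Fw2 dw2]].
  pose proof (dist_le_diam Z d Hb (F x) w1 w2 Fw1 Fw2).
  pose proof (tri z0 w1 u1). pose proof (tri w1 w2 u1). rewrite (sym w2 u1) in *.
  unfold r in *. lra.
Qed.

End LowerQuasicontinuous.

Theorem lemma3p2 (X Z : Type) (T : topology X) (d : Z -> Z -> R)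
  (Hd : is_metric d) (Hb : bounded_metric d)
  (F : X -> Z -> Prop) (HF : forall x, exists z, F x z)
  (Hlq : lower_quasicontinuous T d F) :
  residual T (fun x => forall eps, 0 < eps ->
    exists U, nbhd T x U /\ diam d (img F U) <= 2 * diam d (F x) + eps).
Proof.
  apply residual_of_dense_interiors with
    (A := fun n x => exists U, nbhd T x U /\
            diam d (img F U) <= 2 * diam d (F x) + / INR (S n)).
  - intro n. apply dense_interior. intros V HV Vne.
    assert (Hn : 0 < / INR (S n)) by (apply Rinv_0_lt_compat, lt_0_INR; lia).
    destruct (lqc_diam_control X Z T d Hd Hb F HF Hlq _ V Hn HV Vne)
      as [O [HO [One [OV Obound]]]].
    exists O. split; [exact HO|]. split; [exact One|]. split; [exact OV|].
    intros y Oy. exists O. split; [exists O; auto|]. apply Obound, Oy.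
  - intros x Hx eps Heps.
    destruct (exists_inv_succ_lt eps Heps) as [n Hn].
    destruct (Hx n) as [U [HU HUdiam]].
    exists U. split; [exact HU|]. lra.
Qed.
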